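(* Let $K$ be a finitely generated ring and $I$ a two-sided ideal of $K$ such that the additive group of $K/I$ is finitely generated. Then $I$ is finitely generated as a ring.
   Context: Rings are associative and not necessarily unital; ''finitely generated ring'' means generated as a ring by finitely many elements. *)

(* Rings are associative, not necessarily unital:
   a Z-module (zmodType) with an associative, biadditive multiplication. *)
From HB Require Import structures.
From mathcomp Require Import all_boot all_algebra.
Set Implicit Arguments. Unset Strict Implicit. Unset Printing Implicit Defensive.
Import GRing.Theory.
Local Open Scope ring_scope.

Definition nu_ring_axioms (K : zmodType) (mul : K -> K -> K) : Prop :=
  [/\ forall x y z, mul x (mul y z) = mul (mul x y) z,
      forall x y z, mul (x + y) z = mul x z + mul y z
    & forall x y z, mul x (y + z) = mul x y + mul x z].

Definition two_sided_ideal (K : zmodType) (mul : K -> K -> K) (I : K -> Prop) : Prop :=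
  [/\ I 0, (forall x y, I x -> I y -> I (x - y)),
      (forall a x, I x -> I (mul a x))
    & (forall a x, I x -> I (mul x a))].

Inductive ring_gen (K : zmodType) (mul : K -> K -> K) (s : seq K) : K -> Prop :=
  | rg_in x : x \in s -> ring_gen mul s x
  | rg_0 : ring_gen mul s 0
  | rg_sub x y : ring_gen mul s x -> ring_gen mul s y -> ring_gen mul s (x - y)
  | rg_mul x y : ring_gen mul s x -> ring_gen mul s y -> ring_gen mul s (mul x y).

Inductive add_gen (K : zmodType) (s : seq K) : K -> Prop :=
  | ag_in x : x \in s -> add_gen s x
  | ag_0 : add_gen s 0
  | ag_sub x y : add_gen s x -> add_gen s y -> add_gen s (x - y).

Definition fg_ring (K : zmodType) (mul : K -> K -> K) : Prop :=
  exists s : seq K, forall x, ring_gen mul s x.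

(* The additive group of K/I is finitely generated: finitely many classes
   t_i + I generate K/I, i.e. every x is in span_Z(t) + I. *)
Definition fg_quotient_additive (K : zmodType) (I : K -> Prop) : Prop :=
  exists t : seq K, forall x, exists y, add_gen t y /\ I (x - y).

Definition fg_subring (K : zmodType) (mul : K -> K -> K) (I : K -> Prop) : Prop :=
  exists u : seq K, (forall x, x \in u -> I x) /\ (forall x, I x <-> ring_gen mul u x).

(* K = <t> + I as groups, where <t> is the additive span of finitely many
   representatives t of K/I. Fix finite sets of elements of I: the
   I-components of the ring generators of K, the I-components of the products
   of two representatives, and additive generators of the f.g. abelian group
   I ∩ <t>. Enlarge this set G by the products tG, Gt and tGt. The subring R
   generated by the enlarged set is stable under multiplication by t on both
   sides, hence <t> + R is a subring containing the generators of K, so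
   K = <t> + R; and an x in I written as y + r has y in I ∩ <t> ⊆ R. *)
From mathcomp Require Import all_boot all_algebra.
From Stdlib Require Import Classical IndefiniteDescription.
Set Implicit Arguments. Unset Strict Implicit. Unset Printing Implicit Defensive.
Import GRing.Theory.
Local Open Scope ring_scope.

Definition addsubgroup (K : zmodType) (P : K -> Prop) :=
  P 0 /\ forall x y, P x -> P y -> P (x - y).

Section AddSubgroup.
Variables (K : zmodType) (P : K -> Prop).
Hypothesis HP : addsubgroup P.

Lemma addsubgroupN x : P x -> P (- x).
Proof. by move=> Px; rewrite -sub0r; apply: HP.2 => //; apply: HP.1. Qed.

Lemma addsubgroupD x y : P x -> P y -> P (x + y).
Proof. by move=> Px Py; rewrite -[y]opprK; apply: HP.2 => //; apply: addsubgroupN. Qed.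

Lemma addsubgroupMz x k : P x -> P (x *~ k).
Proof.
move=> Px; have PMn n : P (x *+ n).
  by elim: n => [|n IHn]; rewrite ?mulr0n ?mulrS; [apply: HP.1 | apply: addsubgroupD].
case: k => n; first exact: PMn.
by rewrite NegzE mulrNz; apply/addsubgroupN/PMn.
Qed.

Lemma add_gen_min (s : seq K) :
  (forall x, x \in s -> P x) -> forall x, add_gen s x -> P x.
Proof. by move=> sP x; elim=> [y /sP | | y z _ Py _ Pz] //; [apply: HP.1 | apply: HP.2]. Qed.

End AddSubgroup.

Lemma addsubgroup_preim (K K' : zmodType) (f : K -> K') (P : K' -> Prop) :
  (forall x y, f (x - y) = f x - f y) -> addsubgroup P -> addsubgroup (fun x => P (f x)).
Proof.
move=> fB [P0 PB]; split=> [|x y Px Py]; last by rewrite fB; apply: PB.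
by rewrite -(subrr 0) fB subrr.
Qed.

Lemma add_gen_addsubgroup (K : zmodType) (s : seq K) : addsubgroup (add_gen s).
Proof. by split=> [|x y]; [apply: ag_0 | apply: ag_sub]. Qed.

Lemma ring_gen_addsubgroup (K : zmodType) mul (s : seq K) : addsubgroup (ring_gen mul s).
Proof. by split=> [|x y]; [apply: rg_0 | apply: rg_sub]. Qed.

Lemma add_gen_subset (K : zmodType) (s s' : seq K) :
  (forall x, x \in s -> add_gen s' x) -> forall x, add_gen s x -> add_gen s' x.
Proof. by move=> ss' x; apply: (add_gen_min (add_gen_addsubgroup s') ss'). Qed.

Lemma add_gen_cons (K : zmodType) (a : K) (t : seq K) x :
  add_gen (a :: t) x <-> exists k y, add_gen t y /\ x = a *~ k + y.
Proof.
split.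
- elim=> [z | | z w _ [k1 [y1 [H1 ->]]] _ [k2 [y2 [H2 ->]]]].
  + rewrite in_cons => /predU1P [-> | zt].
      by exists 1, 0; split; [apply: ag_0 | rewrite addr0].
    by exists 0, z; split; [apply: ag_in | rewrite mulr0z add0r].
  + by exists 0, 0; split; [apply: ag_0 | rewrite mulr0z addr0].
  + exists (k1 - k2), (y1 - y2); split; first exact: ag_sub.
    by rewrite mulrzBr opprD addrACA.
- move=> [k [y [Hy ->]]]; apply: addsubgroupD; first exact: add_gen_addsubgroup.
    apply: addsubgroupMz; first exact: add_gen_addsubgroup.
    by apply: ag_in; rewrite mem_head.
  by apply: add_gen_subset Hy => z zt; apply: ag_in; rewrite in_cons zt orbT.
Qed.

Lemma ex_minimal_nat (P : nat -> Prop) :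
  (exists n, P n) -> exists n, P n /\ forall m, (m < n)%N -> ~ P m.
Proof.
move=> [n Pn]; apply: NNPP => noMin.
by elim/ltn_ind: n Pn => n IHn Pn; apply: noMin; exists n.
Qed.

Lemma int_addsubgroup_principal (D : int -> Prop) :
  addsubgroup D -> exists2 d, D d & forall k, D k -> (d %| k)%Z.
Proof.
move=> HD; have Dabs k : D k -> D `|k|%N.
  by case: k => n Dk //; have := addsubgroupN HD Dk; rewrite NegzE opprK.
have [[n [n_gt0 Dn]] | noPos] := classic (exists n : nat, (0 < n)%N /\ D n); last first.
  exists 0 => [|k Dk]; first exact: HD.1.
  rewrite dvd0z; apply/eqP; apply: NNPP => k_neq0; apply: noPos.
  by exists `|k|%N; split; [rewrite absz_gt0; apply/eqP | apply: Dabs].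
have [m [[m_gt0 Dm] m_min]] :=
  @ex_minimal_nat (fun n => (0 < n)%N /\ D n) (ex_intro _ n (conj n_gt0 Dn)).
exists m => // k Dk; apply/dvdz_mod0P.
have m_neq0 : m%:Z != 0 by rewrite eqz_nat -lt0n.
have Dr : D (k %% m)%Z.
  have -> : (k %% m)%Z = k - m%:Z *~ (k %/ m)%Z.
    by rewrite -mulrzr intz mulrC {2}(divz_eq k m) addrC addKr.
  by apply: HD.2 => //; apply: addsubgroupMz.
have := modz_ge0 k m_neq0; have := ltz_pmod k (m_gt0 : 0 < m%:Z).
case: (k %% m)%Z Dr => // r Dr r_lt_m _.
by case: r Dr r_lt_m => // r Dr r_lt_m; case: (m_min r.+1).
Qed.

Lemma add_gen_addsubgroup_fg (K : zmodType) (P : K -> Prop) (t : seq K) :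
  addsubgroup P ->
  exists w, (forall x, x \in w -> P x) /\ forall x, add_gen t x -> P x -> add_gen w x.
Proof.
move=> HP; elim: t => [|a t [w [wP tPw]]]; first by exists [::].
pose D k := exists2 y, add_gen t y & P (a *~ k + y).
have HD : addsubgroup D.
  split=> [|k1 k2 [y1 ty1 P1] [y2 ty2 P2]].
    by exists 0; [apply: ag_0 | rewrite mulr0z addr0; apply: HP.1].
  exists (y1 - y2); first exact: ag_sub.
  by rewrite mulrzBr addrACA -opprD; apply: HP.2.
have [d [y0 ty0 Pg] dvd_d] := int_addsubgroup_principal HD.
set g := a *~ d + y0 in Pg; exists (g :: w); split.
  by move=> x /predU1P [-> | /wP].
move=> x /add_gen_cons [k [y [ty ->]]] Px.
have /dvdzP [q def_k] := dvd_d k (ex_intro2 _ _ y ty Px).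
have decomp : a *~ k + y = g *~ q + (y - y0 *~ q).
  by rewrite def_k mulrC mulrzA mulrzDl addrACA subrr addr0.
have Pr : P (y - y0 *~ q).
  have := HP.2 _ _ Px (addsubgroupMz HP q Pg).
  by rewrite decomp addrC addKr.
rewrite decomp; apply: addsubgroupD; first exact: add_gen_addsubgroup.
  apply: addsubgroupMz; first exact: add_gen_addsubgroup.
  by apply: ag_in; rewrite mem_head.
apply: add_gen_subset => [z zw|]; first by apply: ag_in; rewrite in_cons zw orbT.
apply: tPw Pr; apply: ag_sub => //.
by apply: addsubgroupMz; first exact: add_gen_addsubgroup.
Qed.

Definition addset (K : zmodType) (P Q : K -> Prop) (x : K) :=
  exists y z, [/\ P y, Q z & x = y + z].

Lemma addset_addsubgroup (K : zmodType) (P Q : K -> Prop) :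
  addsubgroup P -> addsubgroup Q -> addsubgroup (addset P Q).
Proof.
move=> [P0 PB] [Q0 QB]; split; first by exists 0, 0; rewrite addr0.
move=> _ _ [y1 [z1 [P1 Q1 ->]]] [y2 [z2 [P2 Q2 ->]]].
by exists (y1 - y2), (z1 - z2); split; [apply: PB | apply: QB | rewrite opprD addrACA].
Qed.

Section NonUnitalRing.
Variables (K : zmodType) (mul : K -> K -> K).
Hypothesis mulA : forall x y z, mul x (mul y z) = mul (mul x y) z.
Hypothesis mulDl : forall x y z, mul (x + y) z = mul x z + mul y z.
Hypothesis mulDr : forall x y z, mul x (y + z) = mul x y + mul x z.

Lemma nu_mulBl x y z : mul (x - y) z = mul x z - mul y z.
Proof. by apply/eqP; rewrite eq_sym subr_eq -mulDl subrK. Qed.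

Lemma nu_mulBr x y z : mul x (y - z) = mul x y - mul x z.
Proof. by apply/eqP; rewrite eq_sym subr_eq -mulDr subrK. Qed.

Lemma nu_mulr0 x : mul x 0 = 0.
Proof. by apply: (addrI (mul x 0)); rewrite -mulDr !addr0. Qed.

Lemma nu_mul0r x : mul 0 x = 0.
Proof. by apply: (addrI (mul 0 x)); rewrite -mulDl !addr0. Qed.

Definition nu_subring (P : K -> Prop) :=
  [/\ P 0, forall x y, P x -> P y -> P (x - y) & forall x y, P x -> P y -> P (mul x y)].

Lemma ring_gen_min (P : K -> Prop) (s : seq K) :
  nu_subring P -> (forall x, x \in s -> P x) -> forall x, ring_gen mul s x -> P x.
Proof.
by move=> [P0 PB PM] sP x; elim=> [y /sP | | y z _ Py _ Pz | y z _ Py _ Pz]; auto.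
Qed.

Lemma add_gen_mull (P : K -> Prop) (t : seq K) z :
  addsubgroup P -> (forall a, a \in t -> P (mul a z)) ->
  forall y, add_gen t y -> P (mul y z).
Proof.
move=> HP tP y; apply: (add_gen_min (addsubgroup_preim _ HP) tP).
by move=> ? ?; apply: nu_mulBl.
Qed.

Lemma add_gen_mulr (P : K -> Prop) (t : seq K) z :
  addsubgroup P -> (forall a, a \in t -> P (mul z a)) ->
  forall y, add_gen t y -> P (mul z y).
Proof.
move=> HP tP y; apply: (add_gen_min (addsubgroup_preim _ HP) tP).
by move=> ? ?; apply: nu_mulBr.
Qed.

Definition ideal_gens (t G : seq K) :=
  let tG := [seq mul a g | a <- t, g <- G] in
  G ++ tG ++ [seq mul g a | a <- t, g <- G] ++ [seq mul x b | x <- tG, b <- t].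

Lemma ideal_gens_ind (t G : seq K) (P : K -> Prop) :
  (forall g, g \in G -> P g) ->
  (forall a g, a \in t -> g \in G -> P (mul a g)) ->
  (forall a g, a \in t -> g \in G -> P (mul g a)) ->
  (forall a g b, a \in t -> g \in G -> b \in t -> P (mul (mul a g) b)) ->
  forall x, x \in ideal_gens t G -> P x.
Proof.
move=> PG PtG PGt PtGt x; rewrite !mem_cat.
case/or4P=> [/PG // | | |].
- by case/allpairsP=> [[a g] [/= ta gG ->]]; apply: PtG.
- by case/allpairsP=> [[a g] [/= ta gG ->]]; apply: PGt.
by case/allpairsP=> [[_ b] [/= /allpairsP [[a g] [/= ta gG ->]] tb ->]]; apply: PtGt.
Qed.

Lemma ideal_gens_sub (I : K -> Prop) (t G : seq K) :
  two_sided_ideal mul I -> (forall g, g \in G -> I g) ->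
  forall x, ring_gen mul (ideal_gens t G) x -> I x.
Proof.
move=> [I0 IB IL IR] GI; apply: ring_gen_min; first by split=> // x y _; apply: IL.
apply: (ideal_gens_ind (P := I)) => [g gG | a g _ gG | a g _ gG | a g b _ gG _].
- exact: GI.
- exact/IL/GI.
- exact/IR/GI.
- exact/IR/IL/GI.
Qed.

Section IdealGens.
Variables t G : seq K.
Hypothesis tt_dec :
  forall a b, a \in t -> b \in t -> exists2 y, add_gen t y & mul a b - y \in G.

Local Notation R := (ring_gen mul (ideal_gens t G)).

Let R_G g : g \in G -> R g.
Proof. by move=> gG; apply: rg_in; rewrite mem_cat gG. Qed.

Let R_tG a g : a \in t -> g \in G -> R (mul a g).
Proof. by move=> ta gG; apply: rg_in; rewrite !mem_cat allpairs_f ?orbT. Qed.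

Let R_Gt a g : a \in t -> g \in G -> R (mul g a).
Proof.
move=> ta gG; apply: rg_in.
by rewrite !mem_cat (allpairs_f (fun a g => mul g a)) ?orbT.
Qed.

Let R_tGt a g b : a \in t -> g \in G -> b \in t -> R (mul (mul a g) b).
Proof.
move=> ta gG tb; apply: rg_in.
by rewrite !mem_cat (allpairs_f (fun x b => mul x b) (allpairs_f _ ta gG) tb) !orbT.
Qed.

Lemma ring_gen_mul_ttl a a' z : a \in t -> a' \in t ->
  (forall c, c \in t -> R (mul c z)) -> (forall b, b \in G -> R (mul b z)) ->
  R (mul (mul a a') z).
Proof.
move=> ta ta' tz Gz; have [y ty yG] := tt_dec ta ta'.
rewrite -(subrK y (mul a a')) mulDl; apply: (addsubgroupD (ring_gen_addsubgroup _ _)).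
  exact: Gz.
exact: add_gen_mull (ring_gen_addsubgroup _ _) tz _ ty.
Qed.

Lemma ring_gen_mul_ttr a a' z : a \in t -> a' \in t ->
  (forall c, c \in t -> R (mul z c)) -> (forall b, b \in G -> R (mul z b)) ->
  R (mul z (mul a a')).
Proof.
move=> ta ta' tz Gz; have [y ty yG] := tt_dec ta ta'.
rewrite -(subrK y (mul a a')) mulDr; apply: (addsubgroupD (ring_gen_addsubgroup _ _)).
  exact: Gz.
exact: add_gen_mulr (ring_gen_addsubgroup _ _) tz _ ty.
Qed.

Lemma ideal_gens_mull a x : a \in t -> x \in ideal_gens t G -> R (mul a x).
Proof.
move=> ta; apply: (ideal_gens_ind (P := fun x => R (mul a x))).
- by move=> g; apply: R_tG.
- move=> a' g ta' gG; rewrite mulA; apply: ring_gen_mul_ttl => // [c tc | b bG].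
    exact: R_tG.
  by apply: rg_mul; apply: R_G.
- by move=> a' g ta' gG; rewrite mulA; apply: R_tGt.
- move=> a' g b ta' gG tb; rewrite 2!mulA -mulA.
  apply: ring_gen_mul_ttl => // [c tc | b' b'G]; first by rewrite mulA; apply: R_tGt.
  by apply: rg_mul; [apply: R_G | apply: R_Gt].
Qed.

Lemma ideal_gens_mulr a x : a \in t -> x \in ideal_gens t G -> R (mul x a).
Proof.
move=> ta; apply: (ideal_gens_ind (P := fun x => R (mul x a))).
- by move=> g; apply: R_Gt.
- by move=> a' g ta' gG; apply: R_tGt.
- move=> a' g ta' gG; rewrite -mulA; apply: ring_gen_mul_ttr => // [c tc | b bG].
    exact: R_Gt.
  by apply: rg_mul; apply: R_G.
- move=> a' g b ta' gG tb; rewrite -mulA.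
  apply: ring_gen_mul_ttr => // [c tc | b' b'G]; first exact: R_tGt.
  by apply: rg_mul; [apply: R_tG | apply: R_G].
Qed.

Lemma ring_gen_mull a r : a \in t -> R r -> R (mul a r).
Proof.
move=> ta; elim=> [x /(ideal_gens_mull ta) // | | x y _ Rx _ Ry | x y _ Rx Ry _].
- by rewrite nu_mulr0; apply: rg_0.
- by rewrite nu_mulBr; apply: rg_sub.
- by rewrite mulA; apply: rg_mul.
Qed.

Lemma ring_gen_mulr a r : a \in t -> R r -> R (mul r a).
Proof.
move=> ta; elim=> [x /(ideal_gens_mulr ta) // | | x y _ Rx _ Ry | x y Rx _ _ Ry].
- by rewrite nu_mul0r; apply: rg_0.
- by rewrite nu_mulBl; apply: rg_sub.
- by rewrite -mulA; apply: rg_mul.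
Qed.

Lemma ring_gen_addset (s : seq K) :
  (forall x, x \in s -> exists2 y, add_gen t y & x - y \in G) ->
  forall x, ring_gen mul s x -> addset (add_gen t) R x.
Proof.
move=> s_dec; have R_sub := ring_gen_addsubgroup mul (ideal_gens t G).
have T_sub := addset_addsubgroup (add_gen_addsubgroup t) R_sub.
have T_dec x y : add_gen t y -> x - y \in G -> addset (add_gen t) R x.
  by move=> ty xyG; exists y, (x - y); split; [| apply: R_G | rewrite addrC subrK].
have T_R r : R r -> addset (add_gen t) R r.
  by move=> Rr; exists 0, r; split; [apply: ag_0 | | rewrite add0r].
apply: ring_gen_min => [|x /s_dec [y ty]]; last exact: T_dec.
split; [exact: T_sub.1 | exact: T_sub.2 |].
move=> _ _ [y1 [r1 [ty1 Rr1 ->]]] [y2 [r2 [ty2 Rr2 ->]]].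
rewrite mulDl !mulDr; do 2!apply: (addsubgroupD T_sub).
- apply: (add_gen_mulr T_sub _ ty2) => a ta.
  apply: (add_gen_mull T_sub _ ty1) => a' ta'.
  by have [y ty] := tt_dec ta' ta; apply: T_dec.
- by apply/T_R/(add_gen_mull R_sub _ ty1) => a ta; apply: ring_gen_mull.
- by apply/T_R/(add_gen_mulr R_sub _ ty2) => a ta; apply: ring_gen_mulr.
- by apply/T_R/rg_mul.
Qed.

End IdealGens.

End NonUnitalRing.

Theorem proposition2 (K : zmodType) (mul : K -> K -> K) (I : K -> Prop) :
  nu_ring_axioms mul ->
  fg_ring mul ->
  two_sided_ideal mul I ->
  fg_quotient_additive I ->
  fg_subring mul I.
Proof.
move=> [mulA mulDl mulDr] [s gen_s] idealI [t /functional_choice [p tpI]].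
have I_sub : addsubgroup I by case: idealI.
have [w [wI tIw]] := add_gen_addsubgroup_fg t I_sub.
pose G := [seq x - p x | x <- s] ++ [seq mul a b - p (mul a b) | a <- t, b <- t] ++ w.
have GI g : g \in G -> I g.
  rewrite !mem_cat => /or3P [/mapP [x _ ->] | /allpairsP [[a b] [_ _ ->]] | /wI] //.
  - exact: (tpI x).2.
  - exact: (tpI (mul a b)).2.
have RI := ideal_gens_sub (t := t) idealI GI.
have tt_dec a b : a \in t -> b \in t -> exists2 y, add_gen t y & mul a b - y \in G.
  move=> ta tb; exists (p (mul a b)); first exact: (tpI _).1.
  by rewrite !mem_cat (allpairs_f (fun a b => mul a b - p (mul a b))) ?orbT.
have s_dec x : x \in s -> exists2 y, add_gen t y & x - y \in G.
  by move=> xs; exists (p x); [apply: (tpI _).1 | rewrite mem_cat (map_f (fun x => x - p x))].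
exists (ideal_gens mul t G); split=> [x /(rg_in mul) /RI // | x]; split=> [Ix|]; last exact: RI.
have [y [r [ty Rr def_x]]] := ring_gen_addset mulA mulDl mulDr tt_dec s_dec (gen_s x).
have Iy : I y by have := I_sub.2 _ _ Ix (RI _ Rr); rewrite def_x addrK.
rewrite def_x; apply: (addsubgroupD (ring_gen_addsubgroup _ _)) Rr.
apply: (add_gen_min (ring_gen_addsubgroup _ _) _ (tIw _ ty Iy)) => g wg.
by apply: rg_in; rewrite !mem_cat wg !orbT.
Qed.
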